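(* Let $k_1,k_2,k_3\ge 1$ be integers and $G$ the grid graph with vertex set $\{0,\dots,k_1\}\times\{0,\dots,k_2\}\times\{0,\dots,k_3\}$, two vertices adjacent iff they differ by $1$ in exactly one coordinate. Let $\mathcal B=\{B_1,\dots,B_m\}$ be a family of boxes $B_i=[a_i',a_i'']\times[b_i',b_i'']\times[c_i',c_i'']\subseteq\mathbb R^3$ with integers $0\le a_i'<a_i''\le k_1$, $0\le b_i'<b_i''\le k_2$, $0\le c_i'<c_i''\le k_3$, and let $G_i$ be the subgraph of $G$ induced by the vertices of $G$ lying in $B_i$. Let $\widetilde G$ be the graph with vertex set $V(G)\cup\{(u,i):1\le i\le m,\ u\in V(G_i)\}$ whose edges are: all edges of $G$; for each $i$, the edges $(u,i)(w,i)$ for every edge $uw$ of $G_i$; and for each $i$ and each $u\in V(G_i)$, the edge $u\,(u,i)$. Then $\widetilde G$ is a median graph.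
   Context: A connected graph is median if for every three vertices $x,y,z$ the set $I(x,y)\cap I(y,z)\cap I(z,x)$ is a single vertex, where $I(u,v)=\{w: d(u,w)+d(w,v)=d(u,v)\}$ and $d$ is the shortest-path distance. (Geometrically, $\widetilde G$ is the 1-skeleton of the box complex obtained from the box $[0,k_1]\times[0,k_2]\times[0,k_3]$ subdivided into unit cells by attaching, for each $i$, the 4-dimensional box $B_i\times[0,1]$ along $B_i$ in a new, $i$-th, coordinate direction.) *)

From mathcomp Require Import all_boot.
Set Implicit Arguments. Unset Strict Implicit. Unset Printing Implicit Defensive.

Definition walk {T : Type} (e : rel T) (x y : T) (n : nat) : Prop :=
  exists p : seq T, [/\ size p = n, path e x p & last x p = y].

Definition connected_graph {T : Type} (e : rel T) : Prop :=
  forall x y : T, exists n, walk e x y n.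

Definition is_dist {T : Type} (e : rel T) (x y : T) (n : nat) : Prop :=
  walk e x y n /\ forall m, walk e x y m -> n <= m.

Definition in_interval {T : Type} (e : rel T) (u v w : T) : Prop :=
  exists a b c, [/\ is_dist e u w a, is_dist e w v b, is_dist e u v c & a + b = c].

Definition median_graph {T : Type} (e : rel T) : Prop :=
  connected_graph e /\
  forall x y z : T, exists! w : T,
    [/\ in_interval e x y w, in_interval e y z w & in_interval e z x w].

Definition pt := (nat * nat * nat)%type.
Definition px (u : pt) : nat := u.1.1.
Definition py (u : pt) : nat := u.1.2.
Definition pz (u : pt) : nat := u.2.

Definition grid_adj (u w : pt) : bool :=
  [|| [&& (px u == (px w).+1) || (px w == (px u).+1), py u == py w & pz u == pz w],
      [&& px u == px w, (py u == (py w).+1) || (py w == (py u).+1) & pz u == pz w]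
    | [&& px u == px w, py u == py w & (pz u == (pz w).+1) || (pz w == (pz u).+1)]].

Section Gtilde.
Variables (k1 k2 k3 m : nat).
Variables (a1 a2 b1 b2 c1 c2 : 'I_m -> nat).

Definition in_grid (u : pt) : bool := [&& px u <= k1, py u <= k2 & pz u <= k3].

Definition in_box (i : 'I_m) (u : pt) : bool :=
  [&& a1 i <= px u <= a2 i, b1 i <= py u <= b2 i & c1 i <= pz u <= c2 i].

(* raw vertices: (u, None) is the vertex u of G, (u, Some i) is (u,i) *)
Definition gt_valid (v : pt * option 'I_m) : bool :=
  in_grid v.1 && (if v.2 is Some i then in_box i v.1 else true).

Definition gt_vertex := {v : pt * option 'I_m | gt_valid v}.

Definition gt_adj_raw (v w : pt * option 'I_m) : bool :=
  match v.2, w.2 with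
  | None, None => grid_adj v.1 w.1
  | Some i, Some j => (i == j) && grid_adj v.1 w.1
  | None, Some _ => v.1 == w.1
  | Some _, None => v.1 == w.1
  end.

Definition gt_adj : rel gt_vertex := fun v w => gt_adj_raw (sval v) (sval w).
End Gtilde.

From mathcomp Require Import all_boot zify.

Set Implicit Arguments.
Unset Strict Implicit.
Unset Printing Implicit Defensive.

(* Write the vertices of G~ as (u, s) with s = None on the base copy of G and
   s = Some i on the copy of G_i. A geodesic between different copies must pass
   through the base, and inside one copy it can move monotonically towards its
   target because boxes are convex; hence the distance of G~ is
   |u - w|_1 + star(s, t), where star is the path metric of the star with centre
   None. Both path metrics and star metrics have unique medians, so their sum has
   the coordinatewise median as its unique median. That median is a vertex of G~:
   if its star component is Some i, two of the three points lie in B_i, and so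
   does the coordinatewise median of their positions. *)

Section MedianMetric.
Variable T : Type.
Implicit Types (d : T -> T -> nat) (x y z w : T).

Definition between d x y w := d x w + d w y = d x y.

Definition is_median d x y z w :=
  [/\ between d x y w, between d y z w & between d z x w].

Record median_metric d (med : T -> T -> T -> T) : Prop := MedianMetric {
  metric_eq0 : forall x y, d x y = 0 <-> x = y;
  metric_triangle : forall x y w, d x y <= d x w + d w y;
  medianP : forall x y z w, is_median d x y z w <-> w = med x y z }.

Lemma metric_dist0 d med x : median_metric d med -> d x x = 0.
Proof. by case=> eq0 _ _; apply/eq0. Qed.

Lemma median_rot d med x y z : median_metric d med -> med x y z = med y z x.
Proof.
case=> _ _ mP; symmetry; apply/mP.
by have [? ? ?] : is_median d y z x (med y z x) by exact/mP.
Qed.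

Lemma median_idl d med x y : median_metric d med -> med x x y = x.
Proof.
move=> dmed; have d0 := metric_dist0 x dmed.
by symmetry; apply/(medianP dmed); split; rewrite /between d0 ?addn0.
Qed.

End MedianMetric.

Lemma median_metric_sub (T : Type) (P : pred T) (d : T -> T -> nat)
    (med : T -> T -> T -> T)
    (medP : forall x y z, P x -> P y -> P z -> P (med x y z)) :
  median_metric d med ->
  median_metric (fun x y : {x | P x} => d (sval x) (sval y))
    (fun x y z : {x | P x} =>
       exist (fun x => P x) _ (medP _ _ _ (proj2_sig x) (proj2_sig y) (proj2_sig z))).
Proof.
case=> eq0 tri mP; split=> [x y|x y w|x y z w]; first split.
- by move/eq0 => xy; apply: val_inj.
- by move=> ->; apply/eq0.
- exact: tri.
- split; first by move/mP => E; apply: val_inj.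
  by move=> ->; apply/mP.
Qed.

Section ProductMetric.
Variables (A B : Type) (dA : A -> A -> nat) (dB : B -> B -> nat).
Variables (medA : A -> A -> A -> A) (medB : B -> B -> B -> B).

Definition prod_dist (x y : A * B) := dA x.1 y.1 + dB x.2 y.2.

Definition prod_median (x y z : A * B) := (medA x.1 y.1 z.1, medB x.2 y.2 z.2).

Lemma between_prod x y w :
  (forall x y w, dA x y <= dA x w + dA w y) ->
  (forall x y w, dB x y <= dB x w + dB w y) ->
  between prod_dist x y w <-> between dA x.1 y.1 w.1 /\ between dB x.2 y.2 w.2.
Proof.
rewrite /between /prod_dist => triA triB.
have := triA x.1 y.1 w.1; have := triB x.2 y.2 w.2; clear; lia.
Qed.

Lemma median_metric_prod :
  median_metric dA medA -> median_metric dB medB ->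
  median_metric prod_dist prod_median.
Proof.
move=> hA hB; case: (hA) => eqA triA mA; case: (hB) => eqB triB mB; split.
- move=> [x1 x2] [y1 y2]; rewrite /prod_dist /=; split=> [|[-> ->]].
    by move/eqP; rewrite addn_eq0 => /andP[/eqP/eqA -> /eqP/eqB ->].
  by rewrite (metric_dist0 _ hA) (metric_dist0 _ hB).
- by move=> x y w; rewrite /prod_dist addnACA; apply: leq_add.
- have bP u v w := between_prod u v w triA triB; move=> x y z w.
  split=> [[/bP[? ?] /bP[? ?] /bP[? ?]]|->].
    by rewrite [w]surjective_pairing; congr pair; [apply/mA|apply/mB]; split.
  have [? ? ?] := proj2 (mA x.1 y.1 z.1 _) erefl.
  have [? ? ?] := proj2 (mB x.2 y.2 z.2 _) erefl.
  by rewrite /is_median; split; apply/bP.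
Qed.

End ProductMetric.

Section GraphMetric.
Variables (T : Type) (e : rel T) (d : T -> T -> nat) (med : T -> T -> T -> T).
Hypothesis dmed : median_metric d med.
Hypothesis dist_adj : forall x y, e x y -> d x y = 1.
Hypothesis dist_step :
  forall x y, 0 < d x y -> exists2 x', e x x' & d x' y = (d x y).-1.

Lemma walk_dist_le x y n : walk e x y n -> d x y <= n.
Proof.
case=> p [<- ep <-] {n}; elim: p x ep => [|x' p IHp] x /=.
  by rewrite (metric_dist0 x dmed).
case/andP=> /dist_adj exx' /IHp ep.
by apply: leq_trans (metric_triangle dmed x _ x') _; rewrite exx'.
Qed.

Lemma walk_dist x y : walk e x y (d x y).
Proof.
move dxy: (d x y) => n; elim: n x dxy => [|n IHn] x dxy.
  have <- : x = y by apply/(metric_eq0 dmed).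
  by exists [::].
have [x' exx' dx'y] : exists2 x', e x x' & d x' y = n.
  by have := @dist_step x y; rewrite dxy; apply.
have [p [sp ep lp]] := IHn x' dx'y.
by exists (x' :: p); rewrite /= exx' sp ep lp.
Qed.

Lemma is_distE x y n : is_dist e x y n <-> n = d x y.
Proof.
split=> [[/walk_dist_le dxy_le n_min]|->].
  by apply/eqP; rewrite eqn_leq dxy_le (n_min _ (walk_dist x y)).
by split; [exact: walk_dist|exact: walk_dist_le].
Qed.

Lemma in_intervalE x y w : in_interval e x y w <-> between d x y w.
Proof.
split=> [[a [b [c [/is_distE -> /is_distE -> /is_distE -> ?]]]]|?] //.
by exists (d x w), (d w y), (d x y); split; rewrite ?is_distE.
Qed.

Lemma median_graph_of_metric : median_graph e.
Proof.
split=> [x y|x y z]; first by exists (d x y); apply: walk_dist.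
exists (med x y z); split.
  by have [? ? ?] := proj2 (medianP dmed x y z _) erefl; split; apply/in_intervalE.
move=> w [/in_intervalE ? /in_intervalE ? /in_intervalE ?].
by symmetry; apply/(medianP dmed); split.
Qed.

End GraphMetric.

Definition distn (a b : nat) : nat := (a - b) + (b - a).

Definition median3 (a b c : nat) : nat := maxn (minn a b) (minn (maxn a b) c).

Lemma median_metric_distn : median_metric distn median3.
Proof.
rewrite /distn /median3; split=> [a b|a b c|a b c w]; first lia; first lia.
rewrite /is_median /between; split; first by case; lia.
by move=> ->; split; lia.
Qed.

Lemma between_distn_bounds lo hi a b c :
  lo <= a <= hi -> lo <= b <= hi -> between distn a b c -> lo <= c <= hi.
Proof. by rewrite /between /distn; lia. Qed.

Lemma median3_bounds lo hi a b c :
  lo <= a <= hi -> lo <= b <= hi -> lo <= median3 a b c <= hi.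
Proof. by rewrite /median3; lia. Qed.

Lemma between_distn_le hi a b c : a <= hi -> b <= hi -> between distn a b c -> c <= hi.
Proof. by rewrite /between /distn; lia. Qed.

Lemma median3_le hi a b c : a <= hi -> b <= hi -> median3 a b c <= hi.
Proof. by rewrite /median3; lia. Qed.

Section Star.
Variables (T : eqType) (c : T).

Definition star_dist (s t : T) : nat :=
  if s == t then 0 else if (s == c) || (t == c) then 1 else 2.

Definition star_median (s t r : T) : T :=
  if s == t then s else if t == r then t else if r == s then r else c.

Lemma median_metric_star : median_metric star_dist star_median.
Proof.
rewrite /star_dist /star_median; split=> [s t|s t r|s t r w].
- by case: (s =P t) => [->|st]; last case: ifP; split=> // /st.
- by repeat (case: eqP => ? //=; subst).
- rewrite /is_median /between.
  by repeat (case: eqP => ? //=; subst); split=> [[]|?]; try lia; exfalso; congruence.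
Qed.

Lemma star_median_leaf s t r : star_median s t r != c -> [\/ s = t, t = r | r = s].
Proof.
rewrite /star_median; case: (s =P t) => [|_]; first by constructor.
case: (t =P r) => [|_]; first by constructor.
by case: (r =P s) => [|_]; [constructor|rewrite eqxx].
Qed.

End Star.

Definition grid_dist : pt -> pt -> nat := prod_dist (prod_dist distn distn) distn.

Definition grid_median : pt -> pt -> pt -> pt :=
  prod_median (prod_median median3 median3) median3.

Lemma median_metric_grid : median_metric grid_dist grid_median.
Proof.
by apply: median_metric_prod; first apply: median_metric_prod; exact: median_metric_distn.
Qed.

Lemma between_gridP u w u' : between grid_dist u w u' ->
  [/\ between distn (px u) (px w) (px u'), between distn (py u) (py w) (py u')
    & between distn (pz u) (pz w) (pz u')].
Proof.
have tri_n := metric_triangle median_metric_distn.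
have tri_nn := metric_triangle (median_metric_prod median_metric_distn median_metric_distn).
by case/between_prod => // /between_prod[].
Qed.

Lemma grid_adj_dist u w : grid_adj u w -> grid_dist u w = 1.
Proof.
by rewrite /grid_adj /grid_dist /prod_dist /distn /px /py /pz; lia.
Qed.

Lemma grid_step u w : 0 < grid_dist u w ->
  exists2 u', grid_adj u u' & grid_dist u' w = (grid_dist u w).-1.
Proof.
case: u w => [[x y] z] [[x' y'] z'].
rewrite /grid_adj /grid_dist /prod_dist /distn /px /py /pz /=.
case: (ltngtP x x') => [lt_xx'|lt_x'x|<-]; first by exists (x.+1, y, z) => /=; lia.
  by exists (x.-1, y, z) => /=; lia.
case: (ltngtP y y') => [lt_yy'|lt_y'y|<-]; first by exists (x, y.+1, z) => /=; lia.
  by exists (x, y.-1, z) => /=; lia.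
case: (ltngtP z z') => [lt_zz'|lt_z'z|<-]; first by exists (x, y, z.+1) => /=; lia.
  by exists (x, y, z.-1) => /=; lia.
by rewrite !subnn.
Qed.

Definition layer_dist m : pt * option 'I_m -> pt * option 'I_m -> nat :=
  prod_dist grid_dist (star_dist None).

Definition layer_median m :
    pt * option 'I_m -> pt * option 'I_m -> pt * option 'I_m -> pt * option 'I_m :=
  prod_median grid_median (star_median None).

Lemma median_metric_layer m : median_metric (@layer_dist m) (@layer_median m).
Proof. exact: median_metric_prod median_metric_grid (median_metric_star None). Qed.

Lemma gt_adj_raw_dist m (v w : pt * option 'I_m) : gt_adj_raw v w -> layer_dist v w = 1.
Proof.
case: v w => [u [i|]] [w [j|]]; rewrite /gt_adj_raw /layer_dist /prod_dist /star_dist /=.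
- by case/andP=> /eqP <- /grid_adj_dist ->; rewrite (eqxx (Some i)).
- by move/eqP <-; rewrite (metric_dist0 u median_metric_grid).
- by move/eqP <-; rewrite (metric_dist0 u median_metric_grid).
- by move/grid_adj_dist ->.
Qed.

Section Boxes.
Variables (k1 k2 k3 m : nat) (a1 a2 b1 b2 c1 c2 : 'I_m -> nat).
Local Notation valid := (gt_valid k1 k2 k3 a1 a2 b1 b2 c1 c2).
Local Notation in_grid := (in_grid k1 k2 k3).
Local Notation in_box := (in_box a1 a2 b1 b2 c1 c2).

Lemma valid_base u s : valid (u, s) -> valid (u, None).
Proof. by rewrite /gt_valid andbT => /andP[]. Qed.

Lemma valid_between s u w u' :
  valid (u, s) -> valid (w, s) -> between grid_dist u w u' -> valid (u', s).
Proof.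
rewrite /gt_valid /in_grid /= => /andP[/and3P[ux uy uz] bu] /andP[/and3P[wx wy wz] bw].
case/between_gridP=> bx b_y bz.
rewrite (between_distn_le ux wx bx) (between_distn_le uy wy b_y).
rewrite (between_distn_le uz wz bz) /=.
case: s bu bw => [i|] //; rewrite /in_box => /and3P[ux' uy' uz'] /and3P[wx' wy' wz'].
by rewrite (between_distn_bounds ux' wx' bx) (between_distn_bounds uy' wy' b_y)
  (between_distn_bounds uz' wz' bz).
Qed.

Lemma in_grid_median u v w :
  in_grid u -> in_grid v -> in_grid w -> in_grid (grid_median u v w).
Proof.
rewrite /in_grid => /and3P[ux uy uz] /and3P[vx vy vz] _.
by rewrite (median3_le _ ux vx) (median3_le _ uy vy) (median3_le _ uz vz).
Qed.

Lemma in_box_median i u v w :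
  in_box i u -> in_box i v -> in_box i (grid_median u v w).
Proof.
rewrite /in_box => /and3P[ux uy uz] /and3P[vx vy vz].
by rewrite (median3_bounds _ ux vx) (median3_bounds _ uy vy) (median3_bounds _ uz vz).
Qed.

Lemma valid_median v1 v2 v3 :
  valid v1 -> valid v2 -> valid v3 -> valid (layer_median v1 v2 v3).
Proof.
have rot := median_rot _ _ _ (median_metric_star (None : option 'I_m)).
have idl x y := median_idl x y (median_metric_star (None : option 'I_m)).
case: v1 v2 v3 => [u s] [v t] [w r].
rewrite /gt_valid /= => /andP[gu bu] /andP[gv bv] /andP[gw bw].
rewrite in_grid_median //=.
case E: (star_median None s t r) => [i|] //.
have : star_median None s t r != None by rewrite E.
case/star_median_leaf => [st|tr|rs].
- by move: E bu bv; rewrite -st idl => ->; apply: in_box_median.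
- move: E bv bw; rewrite -tr rot idl => ->.
  by rewrite (median_rot _ _ _ median_metric_grid); apply: in_box_median.
- move: E bw bu; rewrite -rs -rot idl => ->.
  by rewrite -(median_rot _ _ _ median_metric_grid); apply: in_box_median.
Qed.

Lemma grid_move s u w : valid (u, s) -> valid (w, s) -> 0 < grid_dist u w ->
  exists2 u', valid (u', s) && gt_adj_raw (u, s) (u', s)
            & grid_dist u' w = (grid_dist u w).-1.
Proof.
move=> vu vw /[dup] duw /grid_step[u' adj du'w]; exists u' => //.
have buw : between grid_dist u w u' by rewrite /between (grid_adj_dist adj) du'w; lia.
by rewrite (valid_between vu vw buw) /gt_adj_raw; case: s {vu vw} => [i|] /=; rewrite ?eqxx.
Qed.

Lemma layer_step v w : valid v -> valid w -> 0 < layer_dist v w ->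
  exists2 v', valid v' && gt_adj_raw v v' & layer_dist v' w = (layer_dist v w).-1.
Proof.
case: v w => [u s] [w t]; rewrite /layer_dist /prod_dist /= => vu.
have star0 x := metric_dist0 x (median_metric_star (None : option 'I_m)).
case: (eqVneq s t) => [<-|st] vw.
  rewrite star0 addn0 => duw; have [u' ? ?] := grid_move vu vw duw.
  by exists (u', s); rewrite //= star0 addn0.
case: s st vu => [i|] st vu _.
  exists (u, None); first by rewrite (valid_base vu) /gt_adj_raw /= eqxx.
  rewrite /= /star_dist; case: t st {vw} => [j|] /=; rewrite ?(inj_eq (@Some_inj _)).
    by move/negbTE ->; lia.
  by lia.
case: t st vw => // j _ vw.
case: (eqVneq u w) vw => [<-|uw] vw.
  exists (u, Some j); first by rewrite vw /gt_adj_raw /= eqxx.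
  by rewrite /= star0 (metric_dist0 _ median_metric_grid).
have duw : 0 < grid_dist u w.
  by rewrite lt0n; apply: contra uw => /eqP/(metric_eq0 median_metric_grid) ->.
have [u' ? du'w] := grid_move vu (valid_base vw) duw.
by exists (u', None); rewrite //= du'w; lia.
Qed.

End Boxes.

Theorem lemma1 (k1 k2 k3 m : nat) (a1 a2 b1 b2 c1 c2 : 'I_m -> nat) :
  1 <= k1 -> 1 <= k2 -> 1 <= k3 ->
  (forall i, a1 i < a2 i <= k1) ->
  (forall i, b1 i < b2 i <= k2) ->
  (forall i, c1 i < c2 i <= k3) ->
  median_graph (@gt_adj k1 k2 k3 m a1 a2 b1 b2 c1 c2).
Proof.
move=> _ _ _ _ _ _.
apply: median_graph_of_metric
  (median_metric_sub (@valid_median k1 k2 k3 m a1 a2 b1 b2 c1 c2) (median_metric_layer m)) _ _.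
- by move=> x y; apply: gt_adj_raw_dist.
- move=> [v vv] [w vw] /(layer_step vv vw)[v' /andP[vv' adj] dv'w].
  by exists (exist _ v' vv').
Qed.
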